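(* Let $G$ be a group with finite generating set $(X,\pi)$ and let $\tau\colon G\to\mathbb{Z}$ be an ordering quasi-morphism with kernel $C$. If a $\tau$-transducer exists, then $P_\tau=\{g\in G:\tau(g)>0\}$ is a one-counter positive cone relative to $C$, i.e. $P_\tau$ is a positive cone relative to $C$ and there is a one-counter language $\mathcal{L}\subseteq X^*$ with $\pi(\mathcal{L})=P_\tau$. In particular, if there is a one-counter language $\mathcal{L}_C\subseteq X^*$ such that $P_C=\pi(\mathcal{L}_C)$ is a positive cone for $C$, then $P_\tau\cup P_C$ is the image under $\pi$ of a one-counter language and is a positive cone of $G$.
   Context: A finite generating set is a finite set $X$ with a surjective monoid homomorphism $\pi\colon X^*\to G$. For a subgroup $K\le G$, a positive cone relative to $K$ is a subsemigroup $P$ with $G=P\sqcup K\sqcup P^{-1}$; a positive cone is one relative to $\{1\}$. A one-counter language is one accepted by a nondeterministic pushdown automaton with a single stack symbol. An ordering quasi-morphism is $\tau\colon G\to\mathbb{Z}$ such that (i) $C=\{g:\tau(g)=0\}$ is a subgroup (the kernel), (ii) $\tau(g^{-1})=-\tau(g)$, (iii) $\tau(g)+\tau(h)+\tau((gh)^{-1})\le1$ for all $g,h$. A rational transducer $\mathbb{T}=(\mathcal{S},X,Y,\delta,s_0,\mathcal{A})$ has finite state set $\mathcal{S}$, input alphabet $X$, output alphabet $Y$, initial state $s_0$, accepting states $\mathcal{A}$ and $\delta\colon\mathcal{S}\times(X\sqcup\{\epsilon\})\to$ finite subsets of $\mathcal{S}\times Y^*$; $(r,v)\in\delta(s,u)$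 means there is a sequence of transitions from $s$ to $r$ with inputs concatenating to $u$ and outputs to $v$. $\mathbb{T}(u)=\{v:(a,v)\in\delta(s_0,u),a\in\mathcal{A}\}$ and $\mathbb{T}^{-1}(\mathcal{M})=\{u:\exists(a,v)\in\delta(s_0,u),a\in\mathcal{A},v\in\mathcal{M}\}$. With $\pi_{\mathbb{Z}}\colon\{t,t^{-1}\}^*\to\mathbb{Z}$, $t\mapsto1,t^{-1}\mapsto-1$, a $\tau$-transducer is a rational transducer with input alphabet $X$ and output alphabet $\{t,t^{-1}\}$ such that $G=\pi(\mathbb{T}^{-1}(\{t,t^{-1}\}^* ))$ and $\pi_{\mathbb{Z}}(v)=\tau(\pi(w))$ for every $w\in\mathbb{T}^{-1}(\{t,t^{-1}\}^* )$ and $v\in\mathbb{T}(w)$. *)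

From HB Require Import structures.
From mathcomp Require Import all_boot all_order all_algebra.
Set Implicit Arguments. Unset Strict Implicit. Unset Printing Implicit Defensive.
Import Order.TTheory GRing.Theory Num.Theory.

Record Grp := {
  gcarrier :> Type;
  gmul : gcarrier -> gcarrier -> gcarrier;
  gone : gcarrier;
  ginv : gcarrier -> gcarrier;
  gmulA : forall x y z, gmul x (gmul y z) = gmul (gmul x y) z;
  gmul1 : forall x, gmul gone x = x;
  gmulV : forall x, gmul (ginv x) x = gone
}.
Arguments gmul {g}. Arguments gone {g}. Arguments ginv {g}.

Section GroupNotions.
Variable G : Grp.

Definition subgroup (H : G -> Prop) : Prop :=
  H gone /\ (forall g h, H g -> H h -> H (gmul g h)) /\ (forall g, H g -> H (ginv g)).

Definition subsemigroup (P : G -> Prop) : Prop :=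
  forall g h, P g -> P h -> P (gmul g h).

Definition rel_pos_cone (K P : G -> Prop) : Prop :=
  subsemigroup P /\
  forall g, (P g \/ K g \/ P (ginv g)) /\
            ~ (P g /\ K g) /\ ~ (P g /\ P (ginv g)) /\ ~ (K g /\ P (ginv g)).

Definition pos_cone (P : G -> Prop) : Prop := rel_pos_cone (fun g => g = gone) P.

Definition pos_cone_of (H P : G -> Prop) : Prop :=
  (forall g, P g -> H g) /\ subsemigroup P /\
  forall g, H g -> (P g \/ g = gone \/ P (ginv g)) /\
            ~ (P g /\ g = gone) /\ ~ (P g /\ P (ginv g)) /\ ~ (g = gone /\ P (ginv g)).

Definition ordering_qm (tau : G -> int) : Prop :=
  subgroup (fun g => tau g = 0%R) /\
  (forall g, tau (ginv g) = (- tau g)%R) /\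
  (forall g h, (tau g + tau h + tau (ginv (gmul g h)) <= 1)%R).

Definition fin_gen_set (X : finType) (pi : seq X -> G) : Prop :=
  pi [::] = gone /\ (forall u v, pi (u ++ v) = gmul (pi u) (pi v)) /\
  (forall g, exists w, pi w = g).

Definition image_is (X : Type) (pi : seq X -> G) (L : seq X -> Prop) (P : G -> Prop) :=
  forall g, P g <-> exists w, L w /\ pi w = g.
End GroupNotions.

Unset Implicit Arguments.
(* A nondeterministic pushdown automaton whose stack alphabet consists of a
   single symbol A (above an unremovable bottom-of-stack marker), accepting
   by final state.  A stack A^n is represented by the counter n.  A transition
   depends on the state, the input (a letter or epsilon = None) and the top of
   the stack (bottom marker iff n = 0); it replaces the top symbol A by A^k
   (if n > 0), or pushes A^k above the bottom marker (if n = 0). *)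
Record oca (X : finType) := {
  oca_Q : finType;
  oca_q0 : oca_Q;
  oca_acc : pred oca_Q;
  oca_trans : oca_Q -> option X -> bool -> seq (oca_Q * nat)
}.

Definition opt_word (X : Type) (o : option X) : seq X :=
  if o is Some a then [:: a] else [::].

Inductive oca_run (X : finType) (M : oca X) :
  oca_Q X M -> nat -> seq X -> oca_Q X M -> nat -> Prop :=
| oca_run_nil q n : oca_run X M q n [::] q n
| oca_run_step q n o q' k w q'' m :
    (q', k) \in oca_trans X M q o (n == 0)%N ->
    oca_run X M q' (n.-1 + k)%N w q'' m ->
    oca_run X M q n (opt_word X o ++ w) q'' m.

Definition oca_accepts (X : finType) (M : oca X) (w : seq X) : Prop :=
  exists q m, oca_run X M (oca_q0 X M) 0 w q m /\ oca_acc X M q.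

Definition one_counter (X : finType) (L : seq X -> Prop) : Prop :=
  exists M : oca X, forall w, L w <-> oca_accepts X M w.

Record transducer (X Y : finType) := {
  tr_S : finType;
  tr_s0 : tr_S;
  tr_acc : pred tr_S;
  tr_delta : tr_S -> option X -> seq (tr_S * seq Y)
}.

Inductive tr_run (X Y : finType) (T : transducer X Y) :
  tr_S X Y T -> seq X -> tr_S X Y T -> seq Y -> Prop :=
| tr_run_nil s : tr_run X Y T s [::] s [::]
| tr_run_step s o s' y u r v :
    (s', y) \in tr_delta X Y T s o ->
    tr_run X Y T s' u r v ->
    tr_run X Y T s (opt_word X o ++ u) r (y ++ v).

Definition tr_out (X Y : finType) (T : transducer X Y) (u : seq X) (v : seq Y) : Prop :=
  exists a, tr_run X Y T (tr_s0 X Y T) u a v /\ tr_acc X Y T a.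

Definition tr_preimage (X Y : finType) (T : transducer X Y) (M : seq Y -> Prop) (u : seq X) : Prop :=
  exists a v, tr_run X Y T (tr_s0 X Y T) u a v /\ tr_acc X Y T a /\ M v.

(* Output alphabet {t, t^{-1}} encoded as bool: true = t, false = t^{-1}. *)
Definition piZ (v : seq bool) : int :=
  foldr (fun b z => ((if b then 1 else -1) + z)%R) 0%R v.

Definition tau_transducer (G : Grp) (X : finType) (pi : seq X -> G) (tau : G -> int)
    (T : transducer X bool) : Prop :=
  (forall g, exists w, tr_preimage X bool T (fun _ => True) w /\ pi w = g) /\
  (forall w v, tr_preimage X bool T (fun _ => True) w -> tr_out X bool T w v -> piZ v = tau (pi w)).
Arguments tau_transducer {G X}.
Arguments one_counter {X}.

From mathcomp Require Import all_boot all_order all_algebra.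
From mathcomp Require Import zify.
Import GRing.Theory Num.Theory.
Set Implicit Arguments. Unset Strict Implicit.

(* The inequality tau (g h) >= tau g + tau h - 1 makes P_tau a semigroup, and
   tau (g^-1) = - tau g gives the trichotomy G = P_tau, C, P_tau^-1.  A cone
   relative to a subgroup C is automatically stable under multiplication by C,
   so it extends lexicographically by any positive cone of C.
   A one-counter automaton recognises the words on which a tau-transducer can
   output a word of positive value: it simulates the transducer, keeps the sign
   of the running value in its finite control and its absolute value on the
   stack, and adds the output of each transition to the counter one unit at a
   time.  Since every output on w has value tau (pi w) and every element of G is
   reached, the image of this language is exactly P_tau. *)

Local Open Scope ring_scope.

Section GroupFacts.
Variable G : Grp.
Implicit Types x y : G.

Lemma gmulxV x : gmul x (ginv x) = gone.
Proof.
transitivity (gmul (gmul (ginv (ginv x)) (ginv x)) (gmul x (ginv x))).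
  by rewrite gmulV gmul1.
by rewrite -gmulA (gmulA (ginv x) x) gmulV gmul1 gmulV.
Qed.

Lemma gmulx1 x : gmul x gone = x.
Proof. by rewrite -(gmulV x) gmulA gmulxV gmul1. Qed.

Lemma ginvK x : ginv (ginv x) = x.
Proof. by rewrite -(gmulx1 (ginv (ginv x))) -(gmulV x) gmulA gmulV gmul1. Qed.

Lemma gmulgK x y : gmul (gmul x y) (ginv y) = x.
Proof. by rewrite -gmulA gmulxV gmulx1. Qed.

Lemma gmulKg x y : gmul (ginv x) (gmul x y) = y.
Proof. by rewrite gmulA gmulV gmul1. Qed.

End GroupFacts.

Section RelativeCone.
Variables (G : Grp) (K P : G -> Prop).
Hypotheses (K_sub : subgroup K) (P_cone : rel_pos_cone K P).

Lemma rel_pos_cone_mulr p k : P p -> K k -> P (gmul p k).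
Proof.
have [Kmul Kinv] := K_sub.2; have [Pmul Ptri] := P_cone.
move=> Pp Kk; have [[//|[Kpk|Ppk']] _] := Ptri (gmul p k).
  have [_ [PK _]] := Ptri p; case: PK; split=> //.
  by rewrite -(gmulgK p k); apply: Kmul => //; apply: Kinv.
have [_ [PK _]] := Ptri (ginv k); case: PK; split; last exact: Kinv.
by have := Pmul _ _ Ppk' Pp; rewrite -{2}(gmulgK p k) gmulA gmulV gmul1.
Qed.

Lemma rel_pos_cone_mull k p : K k -> P p -> P (gmul k p).
Proof.
have [Kmul Kinv] := K_sub.2; have [Pmul Ptri] := P_cone.
move=> Kk Pp; have [[//|[Kkp|Pkp']] _] := Ptri (gmul k p).
  have [_ [PK _]] := Ptri p; case: PK; split=> //.
  by rewrite -(gmulKg k p); apply: Kmul => //; apply: Kinv.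
have [_ [PK _]] := Ptri (ginv k); case: PK; split; last exact: Kinv.
by have := Pmul _ _ Pp Pkp'; rewrite -{1}(gmulKg k p) -gmulA gmulxV gmulx1.
Qed.

Lemma pos_cone_lex Q : pos_cone_of K Q -> pos_cone (fun g => P g \/ Q g).
Proof.
move=> [QK [Qmul Qtri]]; have [Pmul Ptri] := P_cone; have [K1 [_ Kinv]] := K_sub.
split=> [g h [Pg|Qg] [Ph|Qh]|g].
- by left; apply: Pmul.
- by left; apply: rel_pos_cone_mulr (QK _ Qh).
- by left; apply: rel_pos_cone_mull (QK _ Qg) _.
- by right; apply: Qmul.
have Qinv : Q (ginv g) -> K g by rewrite -{2}(ginvK g) => /QK /Kinv.
have K1g : g = gone -> K g by move->.
move: (Ptri g) (Qtri g) (QK g); tauto.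
Qed.

End RelativeCone.

Section OrderingQuasiMorphism.
Variables (G : Grp) (tau : G -> int).
Hypothesis tau_qm : ordering_qm tau.

Lemma ordering_qm_mul_ge g h : tau g + tau h - 1 <= tau (gmul g h).
Proof. by have [_ [tauV tau3]] := tau_qm; have := tau3 g h; rewrite tauV; lia. Qed.

Lemma ordering_qm_rel_pos_cone :
  rel_pos_cone (fun g => tau g = 0) (fun g => 0 < tau g).
Proof.
have [_ [tauV _]] := tau_qm.
split=> [g h tau_g tau_h|g]; last by rewrite tauV; lia.
by have := ordering_qm_mul_ge g h; lia.
Qed.

End OrderingQuasiMorphism.

Section OneCounterRuns.
Variables (X : finType) (M : oca X).

Lemma oca_run_cat q n w1 q' n' w2 q'' m :
  oca_run X M q n w1 q' n' -> oca_run X M q' n' w2 q'' m ->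
  oca_run X M q n (w1 ++ w2) q'' m.
Proof.
elim=> // {}q {}n o q1 k w q2 m2 step _ IH /IH run2.
by rewrite -catA; apply: oca_run_step step run2.
Qed.

Lemma oca_run_eps q n q' k w q'' m :
  (q', k) \in oca_trans X M q None (n == 0)%N ->
  oca_run X M q' (n.-1 + k) w q'' m -> oca_run X M q n w q'' m.
Proof. exact: oca_run_step. Qed.

Lemma oca_runE q n w q' m : oca_run X M q n w q' m ->
  q' = q /\ w = [::] \/
  exists o q1 k w1, [/\ (q1, k) \in oca_trans X M q o (n == 0)%N,
                        oca_run X M q1 (n.-1 + k) w1 q' m & w = opt_word X o ++ w1].
Proof. by case=> [|{}q {}n o q1 k w1 q2 m2 step run]; [left | right; exists o, q1, k, w1]. Qed.

End OneCounterRuns.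

Section OneCounterLift.
Variables (X : finType) (M N : oca X) (f : oca_Q X M -> oca_Q X N).
Hypothesis trans_f : forall q o z,
  oca_trans X N (f q) o z = [seq (f t.1, t.2) | t <- oca_trans X M q o z].

Lemma oca_run_lift q n w q' m :
  oca_run X M q n w q' m -> oca_run X N (f q) n w (f q') m.
Proof.
elim=> [{}q {}n|{}q {}n o q1 k w1 q2 m2 step _ IH]; first exact: oca_run_nil.
by apply: oca_run_step IH; rewrite trans_f (map_f (fun t => (f t.1, t.2)) step).
Qed.

Lemma oca_run_unlift q n w Q' m : oca_run X N (f q) n w Q' m ->
  exists2 q', Q' = f q' & oca_run X M q n w q' m.
Proof.
move Eq: (f q) => Q run; elim: run q Eq => [Q0 n0|Q0 n0 o Q1 k w1 Q2 m2 step _ IH] q Eq.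
  by exists q => //; apply: oca_run_nil.
rewrite -Eq trans_f in step; case/mapP: step => [[q1 k']] step [Q1E kE]; subst k.
by have [q' -> run] := IH q1 (esym Q1E); exists q' => //; apply: oca_run_step step run.
Qed.

End OneCounterLift.

Section OneCounterUnion.
Variables (X : finType) (M1 M2 : oca X).

Definition oca_union_trans (q : option (oca_Q X M1 + oca_Q X M2)) (o : option X)
    (z : bool) : seq (option (oca_Q X M1 + oca_Q X M2) * nat) :=
  match q, o with
  | None, None => [:: (Some (inl (oca_q0 X M1)), 0%N); (Some (inr (oca_q0 X M2)), 0%N)]
  | None, Some _ => [::]
  | Some (inl q1), _ => [seq (Some (inl t.1), t.2) | t <- oca_trans X M1 q1 o z]
  | Some (inr q2), _ => [seq (Some (inr t.1), t.2) | t <- oca_trans X M2 q2 o z]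
  end.

Definition oca_union_acc (q : option (oca_Q X M1 + oca_Q X M2)) : bool :=
  match q with
  | None => false
  | Some (inl q1) => oca_acc X M1 q1
  | Some (inr q2) => oca_acc X M2 q2
  end.

Definition oca_union : oca X :=
  {| oca_Q := option (oca_Q X M1 + oca_Q X M2); oca_q0 := None;
     oca_acc := oca_union_acc; oca_trans := oca_union_trans |}.

Lemma oca_union_accepts w :
  oca_accepts X oca_union w <-> oca_accepts X M1 w \/ oca_accepts X M2 w.
Proof.
have trans1 q o z : oca_trans X oca_union (Some (inl q)) o z = _ := erefl.
have trans2 q o z : oca_trans X oca_union (Some (inr q)) o z = _ := erefl.
split=> [[Q [m [run accQ]]]|[[q [m [run acc_q]]]|[q [m [run acc_q]]]]].
- case/oca_runE: run => [[E _]|[o [Q1 [k [w1 [step run ->]]]]]]; first by rewrite E in accQ.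
  case: o step => [a|] //=; rewrite !inE => /orP[] /eqP[Q1E kE]; subst Q1 k.
    by have [q QE run1] := oca_run_unlift trans1 run; left; exists q, m; rewrite QE in accQ.
  by have [q QE run2] := oca_run_unlift trans2 run; right; exists q, m; rewrite QE in accQ.
- exists (Some (inl q)), m; split=> //.
  by apply: (oca_run_eps (n := 0) (k := 0)) (oca_run_lift trans1 run); rewrite inE eqxx.
- exists (Some (inr q)), m; split=> //.
  by apply: (oca_run_eps (n := 0) (k := 0)) (oca_run_lift trans2 run); rewrite !inE eqxx orbT.
Qed.

End OneCounterUnion.

Lemma one_counter_union (X : finType) (L1 L2 : seq X -> Prop) :
  one_counter L1 -> one_counter L2 -> one_counter (fun w => L1 w \/ L2 w).
Proof.
move=> [M1 L1M1] [M2 L2M2]; exists (oca_union M1 M2) => w.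
by rewrite oca_union_accepts L1M1 L2M2.
Qed.

Definition signed (b : bool) (n : nat) : int := if b then n%:Z else - n%:Z.

Lemma signedD b m n : signed b (m + n) = signed b m + signed b n.
Proof. by case: b; rewrite /signed PoszD ?opprD. Qed.

Lemma signed_abs x : signed (0 <= x) `|x|%N = x.
Proof. by rewrite /signed; case: (lerP 0 x) => x0; lia. Qed.

Lemma piZ_cat u v : piZ (u ++ v) = piZ u + piZ v.
Proof. by elim: u => [|a u IH] /=; rewrite ?add0r // IH addrA. Qed.

Definition counter_step (z b d : bool) : bool * nat :=
  if z then (d, 1%N) else if b == d then (b, 2%N) else (b, 0%N).

Lemma counter_stepP n b d b' k : counter_step (n == 0)%N b d = (b', k) ->
  signed b' (n.-1 + k) = signed b n + signed d 1.
Proof.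
rewrite /counter_step /signed; case: n => [|n] /=.
  by case=> <- <-; case: b; case: d.
case: ifP => [/eqP <-|b_neq_d]; case=> <- <-; first by case: b; lia.
by case: b d b_neq_d => -[] //=; lia.
Qed.

Lemma predn_add_neq0 n : (n.-1 + (n != 0) = n)%N.
Proof. by case: n => //= n; rewrite addn1. Qed.

Section PositiveOutput.
Variables (X : finType) (T : transducer X bool).
Local Notation S := (tr_S X bool T).
Local Notation delta := (tr_delta X bool T).

Definition out_bound : nat :=
  \max_(s : S) \max_(o : option X) \max_(t <- delta s o) `|piZ t.2|%N.

Lemma out_bound_lt s o t : t \in delta s o -> (`|piZ t.2| < out_bound.+1)%N.
Proof.
move=> t_in; rewrite ltnS.
apply: leq_trans (leq_bigmax s); apply: leq_trans (leq_bigmax o).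
exact: (leq_bigmax_seq t).
Qed.

Definition pos_output_lang (w : seq X) : Prop :=
  exists v, tr_out X bool T w v /\ 0 < piZ v.

(* [Some (s, b, d, c)]: transducer state [s], sign [b] of the simulated integer
   whose absolute value is the counter, and [c] units of output in direction [d]
   still to be added; [None] is the accepting sink. *)
Local Notation state := (option (S * bool * bool * 'I_out_bound.+1)).

Definition pos_trans (q : state) (o : option X) (z : bool) : seq (state * nat) :=
  match q with
  | None => [::]
  | Some (s, b, d, c) =>
    if (0 < c)%N then
      if o is None then
        let bk := counter_step z b d in [:: (Some (s, bk.1, d, inord c.-1), bk.2)]
      else [::]
    else
      [seq (Some (t.1, b, 0 <= piZ t.2, inord `|piZ t.2|), nat_of_bool (~~ z)) | t <- delta s o]
      ++ (if o is None then
            if [&& b, ~~ z & tr_acc X bool T s] then [:: (None, 0%N)] else [::]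
          else [::])
  end.

Definition pos_oca : oca X :=
  {| oca_Q := state; oca_q0 := Some (tr_s0 X bool T, true, true, ord0);
     oca_acc := fun q => q == None; oca_trans := pos_trans |}.

Local Notation run := (oca_run X pos_oca).

Lemma pos_transP s b d c o z q' k :
  (q', k) \in pos_trans (Some (s, b, d, c)) o z ->
  [\/ [/\ (0 < c)%N, o = None & exists2 b', counter_step z b d = (b', k)
                                          & q' = Some (s, b', d, inord c.-1)],
      [/\ c = 0%N :> nat, k = ~~ z & exists2 t, t \in delta s o &
             q' = Some (t.1, b, 0 <= piZ t.2, inord `|piZ t.2|)]
    | [/\ c = 0%N :> nat, o = None, q' = None, k = 0%N & [&& b, ~~ z & tr_acc X bool T s]]].
Proof.
rewrite /=; case: posnP => [c0|c_gt0].
  rewrite c0 /= mem_cat => /orP[/mapP[t t_in [-> ->]]|].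
    by constructor 2; split=> //; exists t.
  by case: o => [a|] //; case: ifP => // acc; rewrite inE => /eqP[-> ->]; constructor 3.
case: o => [a|] //; rewrite inE => /eqP[-> ->]; constructor 1; split=> //.
by exists (counter_step z b d).1; first by case: counter_step.
Qed.

Lemma pos_run_drain s b d c n : (c < out_bound.+1)%N ->
  exists b' n', run (Some (s, b, d, inord c)) n [::] (Some (s, b', d, ord0)) n'
                /\ signed b' n' = signed b n + signed d c.
Proof.
elim: c b n => [|c IH] b n lt_c.
  have -> : inord 0 = ord0 :> 'I_out_bound.+1 by apply: ord_inj; rewrite inordK.
  by exists b, n; split; [apply: oca_run_nil | case: d; rewrite addr0].
case step: (counter_step (n == 0)%N b d) => [b1 k].
have [b' [n' [drain val_n']]] := IH b1 (n.-1 + k)%N (ltnW lt_c).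
exists b', n'; split.
  apply: oca_run_eps drain; rewrite /= inordK //= step.
  by rewrite inE.
by rewrite val_n' (counter_stepP step) -addrA -signedD add1n.
Qed.

Lemma pos_run_complete s u r v : tr_run X bool T s u r v -> forall b d n,
  exists b' d' n', run (Some (s, b, d, ord0)) n u (Some (r, b', d', ord0)) n'
                   /\ signed b' n' = signed b n + piZ v.
Proof.
elim=> [{}s|{}s o s1 y u1 r1 v1 step _ IH] b d n.
  by exists b, d, n; split; [apply: oca_run_nil | rewrite addr0].
have lt_y := out_bound_lt step.
have [b1 [n1 [drain val_n1]]] := pos_run_drain s1 b (0 <= piZ y) n lt_y.
have [b' [d' [n' [run1 val_n']]]] := IH b1 (0 <= piZ y) n1.
exists b', d', n'; split.
  have := oca_run_cat drain run1; rewrite -{1}(predn_add_neq0 n); apply: oca_run_step.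
  by rewrite /= mem_cat; apply/orP; left; apply/mapP; exists (s1, y).
by rewrite val_n' val_n1 signed_abs piZ_cat addrA.
Qed.

Lemma pos_run_sink n w q' m : run None n w q' m -> w = [::].
Proof. by case/oca_runE=> [[_ ->] //|[o [q1 [k [w1 []]]]]]. Qed.

Lemma pos_run_sound q n w q' m : run q n w q' m -> q' = None ->
  forall s b d c, q = Some (s, b, d, c) ->
  exists r v, [/\ tr_run X bool T s w r v, tr_acc X bool T r
                & 0 < signed b n + signed d c + piZ v].
Proof.
elim=> [q0 n0 -> s b d c //|q0 n0 o q1 k w1 q2 m2 step run1 IH q2E s b d c q0E].
rewrite {q0}q0E in step; have {}IH := IH q2E.
case/pos_transP: step => [[c_gt0 -> [b1 step q1E]]|[c0 kE [t t_in q1E]]|[c0 -> q1E _ accept]].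
- have [r [v [run_v acc_r pos]]] := IH _ _ _ _ q1E.
  exists r, v; split=> //; move: pos.
  have -> : signed d c = signed d 1 + signed d c.-1 by rewrite -signedD add1n prednK.
  rewrite (counter_stepP step) inordK ?(leq_ltn_trans (leq_pred c)) //.
  by rewrite !addrA.
- rewrite kE in IH; case: t t_in q1E => s1 y /= y_in q1E.
  have [r [v [run_v acc_r pos]]] := IH _ _ _ _ q1E.
  exists r, (y ++ v); split=> //; first exact: tr_run_step y_in run_v.
  move: pos; rewrite predn_add_neq0 inordK ?(out_bound_lt y_in) // signed_abs piZ_cat c0.
  by case: (d); rewrite addr0 addrA.
- rewrite q1E in run1; rewrite (pos_run_sink run1).
  case/and3P: accept => -> n0_neq0 acc_s; exists s, [::]; split=> //; first exact: tr_run_nil.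
  by rewrite c0 /signed /=; case: (d); lia.
Qed.

Lemma one_counter_pos_output : one_counter pos_output_lang.
Proof.
exists pos_oca => w; split=> [[v [[a [run_v acc_a]] pos]]|[q [m [run0 /eqP q_none]]]].
  have [b [d [n [run0 val_n]]]] := pos_run_complete run_v true true 0.
  have [b_true n_gt0] : b = true /\ (0 < n)%N by move: val_n pos; case: (b); rewrite /signed; lia.
  exists None, n.-1; split=> //; rewrite -[w]cats0; apply: oca_run_cat run0 _.
  apply: (oca_run_eps (k := 0)); last by rewrite addn0; apply: oca_run_nil.
  by rewrite /= mem_cat b_true -lt0n n_gt0 acc_a /= inE eqxx orbT.
have [r [v [run_v acc_r pos]]] := pos_run_sound run0 q_none erefl.
by exists v; split; [exists r | rewrite /signed addr0 add0r in pos].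
Qed.

End PositiveOutput.

Lemma image_is_union (G : Grp) (X : Type) (pi : seq X -> G) L1 L2 P1 P2 :
  image_is pi L1 P1 -> image_is pi L2 P2 ->
  image_is pi (fun w => L1 w \/ L2 w) (fun g => P1 g \/ P2 g).
Proof.
move=> img1 img2 g; rewrite img1 img2; split.
  by case=> -[w [Lw <-]]; exists w; split=> //; [left | right].
by case=> w [[Lw|Lw] <-]; [left | right]; exists w.
Qed.

Lemma tau_transducer_image (G : Grp) (X : finType) (pi : seq X -> G) tau T :
  tau_transducer pi tau T ->
  image_is pi (pos_output_lang T) (fun g => 0 < tau g).
Proof.
move=> [onto tauT] g; split=> [tau_g|[w [[v [out_v pos]] <-]]].
  have [w [[a [v [run_v [acc_a _]]]] gE]] := onto g.
  exists w; split=> //; exists v; split; first by exists a.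
  by rewrite (tauT w v) ?gE //; [exists a, v | exists a].
have [a [run_v acc_a]] := out_v.
by rewrite -(tauT w v) //; exists a, v.
Qed.

Theorem proposition5p6 (G : Grp) (X : finType) (pi : seq X -> G) (tau : G -> int) :
  fin_gen_set pi ->
  ordering_qm tau ->
  (exists T : transducer X bool, tau_transducer pi tau T) ->
  let C := fun g : G => tau g = 0%R in
  let Ptau := fun g : G => (0 < tau g)%R in
  (rel_pos_cone C Ptau /\
   exists L : seq X -> Prop, one_counter L /\ image_is pi L Ptau) /\
  (forall LC : seq X -> Prop, one_counter LC ->
     forall PC : G -> Prop, image_is pi LC PC -> pos_cone_of C PC ->
     (exists L : seq X -> Prop, one_counter L /\
        image_is pi L (fun g => Ptau g \/ PC g)) /\
     pos_cone (fun g => Ptau g \/ PC g)).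
Proof.
move=> _ tau_qm [T tauT] C Ptau.
have cone := ordering_qm_rel_pos_cone tau_qm.
have imgT := tau_transducer_image tauT.
have ocT := one_counter_pos_output T.
split; first by split=> //; exists (pos_output_lang T).
move=> LC ocC PC imgC coneC; split; last exact (pos_cone_lex tau_qm.1 cone coneC).
by exists (fun w => pos_output_lang T w \/ LC w); split;
  [apply: one_counter_union | apply: image_is_union].
Qed.
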